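(* Let $D\geq 3$ be an integer, let $n\geq 1$, and let $A\subset(\mathbb{Z}/D\mathbb{Z})^{n}$ be a sunflower-free set. Then \[ |A|\leq c_{D}^{n},\qquad\text{where } c_{D}=\frac{3}{2^{2/3}}(D-1)^{2/3}. \]
   Context: A set $A\subset(\mathbb{Z}/D\mathbb{Z})^{n}$ is called sunflower-free if for every triple of distinct elements $x,y,z\in A$ there exists a coordinate $i\in\{1,\dots,n\}$ such that exactly two of $x_i,y_i,z_i$ are equal. (Equivalently, $A$ contains no three distinct vectors which, in every coordinate, are either all equal or all pairwise different.) *)

From mathcomp Require Import all_boot.
From Stdlib Require Import Reals.
Set Implicit Arguments. Unset Strict Implicit. Unset Printing Implicit Defensive.

(* Z/DZ is represented by the ordinal type 'I_D (only equality of
   coordinates matters for sunflower-freeness). Vectors of (Z/DZ)^n are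
   finite functions 'I_n -> 'I_D. *)
Definition vec (D n : nat) := {ffun 'I_n -> 'I_D}.

Definition exactly_two {T : eqType} (a b c : T) : bool :=
  [|| (a == b) && (b != c), (b == c) && (c != a) | (a == c) && (a != b)].

Definition sunflower_free (D n : nat) (A : {set vec D n}) : Prop :=
  forall x y z, x \in A -> y \in A -> z \in A ->
    x != y -> y != z -> x != z ->
    exists i : 'I_n, exactly_two (x i) (y i) (z i).

Definition c_const (D : nat) : R :=
  (3 / Rpower 2 (2/3) * Rpower (INR D - 1) (2/3))%R.

(* Over F_3 the function T(x, y, z) = prod_i (1 - [x_i = y_i] - [y_i = z_i] - [x_i = z_i])
   restricted to A^3 is the indicator of the diagonal, because every
   non-constant triple of A has a coordinate where exactly two entries agree.
   Expanding the product, every term depends on at most 2n/3 coordinates of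
   one of x, y, z.  Let r be the dimension of the space of functions on A
   spanned by cylinder indicators depending on at most 2n/3 coordinates.
   Contracting z against a vector h orthogonal to that space kills the terms
   of small z-degree and leaves a matrix of rank at most 2r; choosing h equal
   to 1 on |A| - r points, the same matrix is diagonal of rank at least
   |A| - r.  Hence |A| <= 3r <= 3 * 3^n ((D-1)/2)^(2n/3) = 3 c_D^n, and
   applying this to the cartesian powers of A removes the factor 3. *)

From mathcomp Require Import all_boot all_algebra zify.
From Stdlib Require Import Reals Lra.
From mathcomp Require Import ssrnat.
Set Implicit Arguments. Unset Strict Implicit. Unset Printing Implicit Defensive.
Import GRing.Theory.
Local Open Scope ring_scope.

(* Triples with a repeated element satisfy the condition automatically (see
   [sunflower_free_no_sunflower]); unlike [sunflower_free], this form passes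
   to cartesian powers. *)
Definition no_sunflower (I T : finType) (A : {set {ffun I -> T}}) := forall u v w,
  u \in A -> v \in A -> w \in A -> ~~ ((u == v) && (v == w)) ->
  exists i, exactly_two (u i) (v i) (w i).

Lemma sunflower_free_no_sunflower (D n : nat) (A : {set vec D n}) :
  sunflower_free A -> no_sunflower A.
Proof.
have differ (u v : vec D n) : u != v -> exists i, u i != v i.
  move=> nuv; apply/existsP; apply: contraNT nuv => /existsPn h.
  by apply/eqP/ffunP => i; apply/eqP/negPn/h.
move=> hs u v w uA vA wA hn; rewrite /exactly_two.
have [euv|nuv] := eqVneq u v.
  have [|i hi] := differ v w; first by move: hn; rewrite euv eqxx.
  by exists i; rewrite euv eqxx hi.
have [i hi] := differ u v nuv.
have [<-|nvw] := eqVneq v w; first by exists i; rewrite eqxx (eq_sym (v i)) hi orbT.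
have [<-|nuw] := eqVneq u w; first by exists i; rewrite eqxx hi !orbT.
exact: hs.
Qed.

Section LowDegree.
Variables (R : comPzRingType) (I : finType) (D : nat).
Local Notation V := {ffun I -> 'I_D.+1}.

Definition supp (g : V) : {set I} := [set i | g i != ord0].

(* [cyl g] is the indicator of the cylinder {x | x = g on supp g}; the
   cylinders with [#|supp g| <= k] play the role of the monomials of
   degree at most k. *)
Definition cyl_factor (v a : 'I_D.+1) : R := if v == ord0 then 1 else (a == v)%:R.
Definition cyl (g x : V) : R := \prod_i cyl_factor (g i) (x i).

Definition low_deg (k : nat) (G : V -> R) :=
  exists c : V -> R, (forall g, c g != 0 -> (#|supp g| <= k)%N) /\
    forall x, G x = \sum_g c g * cyl g x.

Lemma low_deg_ext k G1 G2 : G1 =1 G2 -> low_deg k G1 -> low_deg k G2.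
Proof. by move=> e [c [hc eG]]; exists c; split=> // x; rewrite -e. Qed.

Lemma low_deg0 k : low_deg k (fun _ => 0).
Proof.
exists (fun _ => 0); split=> [g|x]; first by rewrite eqxx.
by rewrite big1 // => g _; rewrite mul0r.
Qed.

Lemma low_degD k G1 G2 : low_deg k G1 -> low_deg k G2 ->
  low_deg k (fun x => G1 x + G2 x).
Proof.
move=> [c1 [h1 e1]] [c2 [h2 e2]]; exists (fun g => c1 g + c2 g); split.
  by move=> g; case: (eqVneq (c1 g) 0) => [->|/h1 //]; rewrite add0r; apply: h2.
by move=> x; rewrite e1 e2 -big_split; apply: eq_bigr => g _; rewrite mulrDl.
Qed.

Lemma low_degZ k a G : low_deg k G -> low_deg k (fun x => a * G x).
Proof.
move=> [c [hc e]]; exists (fun g => a * c g); split.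
  by move=> g nz; apply: hc; apply: contraNneq nz => ->; rewrite mulr0.
by move=> x; rewrite e big_distrr; apply: eq_bigr => g _ /=; rewrite mulrA.
Qed.

Lemma low_deg_sum k (J : finType) (P : pred J) (G : J -> V -> R) :
  (forall j, P j -> low_deg k (G j)) ->
  low_deg k (fun x => \sum_(j | P j) G j x).
Proof.
move=> hG; rewrite /index_enum; elim: (Finite.enum J) => [|j r IH].
  by apply: low_deg_ext (low_deg0 k) => x; rewrite big_nil.
case Pj: (P j); last by apply: low_deg_ext IH => x; rewrite big_cons Pj.
by apply: low_deg_ext (low_degD (hG j Pj) IH) => x; rewrite big_cons Pj.
Qed.

Lemma cyl_factor_expand (Fi : 'I_D.+1 -> R) (a : 'I_D.+1) :
  Fi a = \sum_v (if v == ord0 then Fi ord0 else Fi v - Fi ord0) * cyl_factor v a.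
Proof.
rewrite (bigD1 ord0) //= /cyl_factor !eqxx mulr1.
have [->|na] := eqVneq a ord0.
  by rewrite big1 ?addr0 // => v nv; rewrite (negPf nv) eq_sym (negPf nv) mulr0.
rewrite (bigD1 a) //= big1 ?addr0; first by rewrite (negPf na) eqxx mulr1 addrC subrK.
by move=> v /andP[nv nva]; rewrite (negPf nv) eq_sym (negPf nva) mulr0.
Qed.

Lemma low_deg_prod k (Fi : I -> 'I_D.+1 -> R) (S : {set I}) :
  (#|S| <= k)%N -> (forall i a, i \notin S -> Fi i a = Fi i ord0) ->
  low_deg k (fun x => \prod_i Fi i (x i)).
Proof.
move=> hS hc.
pose beta i (v : 'I_D.+1) := if v == ord0 then Fi i ord0 else Fi i v - Fi i ord0.
exists (fun g => \prod_i beta i (g i)); split.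
  move=> g nz; apply: leq_trans hS; apply/subset_leq_card/subsetP => i.
  rewrite inE => ngi; apply/negPn/negP => niS; move: nz.
  by rewrite (bigD1 i) //= /beta (negPf ngi) hc // subrr mul0r eqxx.
move=> x; under eq_bigr do rewrite (cyl_factor_expand (Fi _)).
by rewrite bigA_distr_bigA; apply: eq_bigr => g _; rewrite -big_split.
Qed.

End LowDegree.

Arguments cyl {R I D}.

Section SunflowerPolynomial.
Variables (I : finType) (D : nat).
Local Notation V := {ffun I -> 'I_D.+1}.
Local Notation F := 'F_3.

Definition sunflower_summand (j : 'I_4) (a b c : 'I_D.+1) : F :=
  match val j with
  | 0 => 1 | 1 => - (a == b)%:R | 2 => - (b == c)%:R | _ => - (a == c)%:R
  end.

(* In F_3 the factor [1 - [a = b] - [b = c] - [a = c]] is 1 when a = b = c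
   (as 1 - 3 = 1), 0 when exactly two of a, b, c are equal, and 1 otherwise. *)
Definition sunflower_poly (x y z : V) : F :=
  \prod_i \sum_(j < 4) sunflower_summand j (x i) (y i) (z i).

Definition sunflower_term (s : {ffun I -> 'I_4}) (x y z : V) : F :=
  \prod_i sunflower_summand (s i) (x i) (y i) (z i).

Lemma sunflower_poly_expand x y z :
  sunflower_poly x y z = \sum_s sunflower_term s x y z.
Proof. exact: bigA_distr_bigA. Qed.

Lemma sunflower_factor_exactly_two (a b c : 'I_D.+1) : exactly_two a b c ->
  \sum_(j < 4) sunflower_summand j a b c = 0.
Proof.
rewrite !big_ord_recl big_ord0 /sunflower_summand /=.
case/or3P => /andP[/eqP e n]; subst.
- by rewrite eqxx (negPf n); apply/eqP.
- by rewrite eqxx eq_sym (negPf n); apply/eqP.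
- by rewrite eqxx (eq_sym b) (negPf n); apply/eqP.
Qed.

Lemma sunflower_poly_diag (A : {set V}) x y z : no_sunflower A ->
  x \in A -> y \in A -> z \in A ->
  sunflower_poly x y z = ((x == y) && (y == z))%:R.
Proof.
move=> hA xA yA zA; have [/andP[/eqP <- /eqP <-]|nxyz] := boolP ((x == y) && (y == z)).
  rewrite /sunflower_poly big1 // => i _; rewrite !big_ord_recl big_ord0 /sunflower_summand /= eqxx.
  by apply/eqP.
have [i hi] := hA x y z xA yA zA nxyz.
by rewrite /sunflower_poly (bigD1 i) //= sunflower_factor_exactly_two ?mul0r.
Qed.

(* The number of coordinates in which [sunflower_term s] depends on x, y, z. *)
Definition deg_x (s : {ffun I -> 'I_4}) := #|[set i | val (s i) \in [:: 1; 3]%N]|.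
Definition deg_y (s : {ffun I -> 'I_4}) := #|[set i | val (s i) \in [:: 1; 2]%N]|.
Definition deg_z (s : {ffun I -> 'I_4}) := #|[set i | val (s i) \in [:: 2; 3]%N]|.

Lemma deg_xyz_le s : (deg_x s + deg_y s + deg_z s <= 2 * #|I|)%N.
Proof.
have card_sum (P : pred I) : #|[set i | P i]| = (\sum_i P i)%N.
  by rewrite -sum1dep_card big_mkcond.
rewrite /deg_x /deg_y /deg_z !card_sum -!big_split /= -sum1_card big_distrr /=.
by apply: leq_sum => i _; case: (s i) => [[|[|[|[|]]]]].
Qed.

Lemma low_deg_term_x k s y z : (deg_x s <= k)%N ->
  low_deg k (fun x => sunflower_term s x y z).
Proof.
move=> h; apply: (low_deg_prod (Fi := fun i a => sunflower_summand (s i) a (y i) (z i))) h _.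
by move=> i a; rewrite inE /sunflower_summand; case: (s i) => [[|[|[|[|]]]]].
Qed.

Lemma low_deg_term_y k s x z : (deg_y s <= k)%N ->
  low_deg k (fun y => sunflower_term s x y z).
Proof.
move=> h; apply: (low_deg_prod (Fi := fun i b => sunflower_summand (s i) (x i) b (z i))) h _.
by move=> i a; rewrite inE /sunflower_summand; case: (s i) => [[|[|[|[|]]]]].
Qed.

Lemma low_deg_term_z k s x y : (deg_z s <= k)%N ->
  low_deg k (fun z => sunflower_term s x y z).
Proof.
move=> h; apply: (low_deg_prod (Fi := fun i c => sunflower_summand (s i) (x i) (y i) c)) h _.
by move=> i a; rewrite inE /sunflower_summand; case: (s i) => [[|[|[|[|]]]]].
Qed.

End SunflowerPolynomial.

Section RankBounds.
Variable F : fieldType.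

(* A basis of the left kernel of P^T has a square invertible minor; solving
   against it yields a kernel vector equal to 1 on n - rank P coordinates. *)
Lemma kernel_vector_with_ones (m n : nat) (P : 'M[F]_(m, n)) :
  exists r (f : 'I_r -> 'I_n) (h : 'rV_n),
    [/\ injective f, (n <= r + \rank P)%N, h *m P^T = 0 & forall j, h 0 (f j) = 1].
Proof.
pose K := kermx P^T; pose B := row_base K.
have rkB : row_full B^T by rewrite /row_full mxrank_tr (eq_row_base K).
pose f := fullrankfun rkB; pose C := rowsub f B^T.
have Cu : C^T \in unitmx by rewrite unitmx_tr fullrowsub_unit.
pose w : 'rV_(\rank K) := const_mx 1 *m invmx C^T.
exists (\rank K), f, (w *m B); split.
- exact: fullrankfun_inj.
- by rewrite mxrank_ker mxrank_tr subnK // rank_leq_col.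
- rewrite -mulmxA; have -> : B *m P^T = 0 by apply/sub_kermxP; rewrite eq_row_base.
  by rewrite mulmx0.
- move=> j; have : (w *m C^T) 0 j = 1 by rewrite -mulmxA mulVmx // mulmx1 mxE.
  by rewrite !mxE => <-; apply: eq_bigr => l _; rewrite !mxE.
Qed.

Lemma mxrank_ge_id_minor (N r : nat) (B : 'M[F]_N) (f : 'I_r -> 'I_N) :
  (forall i j, B (f i) (f j) = (i == j)%:R) -> (r <= \rank B)%N.
Proof.
move=> hB; have idB : rowsub f (colsub f B) = 1%:M.
  by apply/matrixP => i j; rewrite !mxE hB.
rewrite -[r](mxrank1 F) -idB rowsubE; apply: leq_trans (mxrankM_maxr _ _) _.
by rewrite -[B in colsub f B]mulmx1 -mulmx_colsub; apply: mxrankM_maxl.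
Qed.

End RankBounds.

Definition low_supp (I : finType) (D k : nat) : {set {ffun I -> 'I_D.+1}} :=
  [set g | (#|supp g| <= k)%N].

Section SliceRank.
Variables (I : finType) (D : nat) (A : {set {ffun I -> 'I_D.+1}}).
Hypothesis hA : no_sunflower A.
Local Notation N := #|A|.
Let a (x : 'I_N) : {ffun I -> 'I_D.+1} := enum_val x.
Let k := ((2 * #|I|) %/ 3)%N.

Let Phi : 'M['F_3]_(#|low_supp I D k|, N) := \matrix_(g, x) cyl (enum_val g) (a x).

Lemma low_deg_row G : low_deg k G -> (\row_x G (a x) <= Phi)%MS.
Proof.
case=> c [hc e]; apply/submxP; exists (\row_g c (enum_val g)).
apply/rowP => x; rewrite !mxE e (bigID (fun g => g \in low_supp I D k)) /=.
rewrite [X in _ + X]big1 ?addr0.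
  rewrite (big_enum_val (fun g => c g * cyl g (a x))) /=.
  by apply/eq_bigr => g _; rewrite !mxE.
move=> g ngk; have [->|/hc cg] := eqVneq (c g) 0; first by rewrite mul0r.
by move: ngk; rewrite inE cg.
Qed.

Lemma low_deg_orthogonal G (h : 'rV_N) : h *m Phi^T = 0 -> low_deg k G ->
  \sum_x h 0 x * G (a x) = 0.
Proof.
move=> hker /low_deg_row /submxP [w ew].
have : (h *m (w *m Phi)^T) 0 0 = 0 by rewrite trmx_mul mulmxA hker mul0mx mxE.
by rewrite -ew mxE; apply: etrans; apply: eq_bigr => x _; rewrite !mxE.
Qed.

Section Slices.
Variable h : 'rV['F_3]_N.
Hypothesis hker : h *m Phi^T = 0.

Definition slice (P : pred {ffun I -> 'I_4}) : 'M['F_3]_N :=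
  \matrix_(x, y) \sum_z h 0 z * \sum_(s | P s) sunflower_term s (a x) (a y) (a z).

Lemma slice_bigID (P Q : pred {ffun I -> 'I_4}) :
  slice P = slice (fun s => P s && Q s) + slice (fun s => P s && ~~ Q s).
Proof.
apply/matrixP => x y; rewrite !mxE -big_split; apply: eq_bigr => z _ /=.
by rewrite -mulrDr (bigID Q).
Qed.

Lemma slice_predT : slice predT = \matrix_(x, y) ((x == y)%:R * h 0 x).
Proof.
apply/matrixP => x y; rewrite !mxE.
under eq_bigr do rewrite -sunflower_poly_expand (sunflower_poly_diag hA) ?enum_valP //.
have [<-|nxy] := eqVneq x y; last first.
  by rewrite mul0r big1 // => z _; rewrite (inj_eq enum_val_inj) (negPf nxy) mulr0.
rewrite (bigD1 x) //= big1 ?addr0; first by rewrite !eqxx mulr1 mul1r.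
by move=> z nzx; rewrite eqxx (inj_eq enum_val_inj) eq_sym (negPf nzx) mulr0.
Qed.

Lemma rank_slice_x (P : pred {ffun I -> 'I_4}) : (forall s, P s -> deg_x s <= k)%N ->
  (\rank (slice P) <= \rank Phi)%N.
Proof.
move=> hP; rewrite -mxrank_tr; apply/mxrankS/row_subP => y.
pose G xv := \sum_z h 0 z * \sum_(s | P s) sunflower_term s xv (a y) (a z).
have -> : row y (slice P)^T = \row_x G (a x) by apply/rowP => x; rewrite !mxE.
apply: low_deg_row; apply: low_deg_sum => z _; apply: low_degZ.
by apply: low_deg_sum => s /hP; apply: low_deg_term_x.
Qed.

Lemma rank_slice_y (P : pred {ffun I -> 'I_4}) : (forall s, P s -> deg_y s <= k)%N ->
  (\rank (slice P) <= \rank Phi)%N.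
Proof.
move=> hP; apply/mxrankS/row_subP => x.
pose G yv := \sum_z h 0 z * \sum_(s | P s) sunflower_term s (a x) yv (a z).
have -> : row x (slice P) = \row_y G (a y) by apply/rowP => y; rewrite !mxE.
apply: low_deg_row; apply: low_deg_sum => z _; apply: low_degZ.
by apply: low_deg_sum => s /hP; apply: low_deg_term_y.
Qed.

Lemma slice_eq0_z (P : pred {ffun I -> 'I_4}) :
  (forall s, P s -> deg_z s <= k)%N -> slice P = 0.
Proof.
move=> hP; apply/matrixP => x y; rewrite !mxE.
apply: (low_deg_orthogonal
  (G := fun zv => \sum_(s | P s) sunflower_term s (a x) (a y) zv)) hker _.
by apply: low_deg_sum => s /hP; apply: low_deg_term_z.
Qed.

End Slices.

Lemma deg_z_le (s : {ffun I -> 'I_4}) :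
  ~~ (deg_x s <= k)%N -> ~~ (deg_y s <= k)%N -> (deg_z s <= k)%N.
Proof.
rewrite -!ltnNge /k => hx hy; have := deg_xyz_le s.
have := divn_eq (2 * #|I|) 3; have := ltn_pmod (2 * #|I|) (isT : 0 < 3)%N.
lia.
Qed.

Lemma card_no_sunflower_le_low_supp : (N <= 3 * #|low_supp I D k|)%N.
Proof.
apply: (@leq_trans (3 * \rank Phi)); last by rewrite leq_mul2l rank_leq_row orbT.
have [r [f [h [finj hr hker hf]]]] := kernel_vector_with_ones Phi.
have rT : (r <= \rank (slice h predT))%N.
  apply: (mxrank_ge_id_minor (f := f)) => i j.
  by rewrite slice_predT mxE (inj_eq finj) hf mulr1.
rewrite (slice_bigID _ _ (fun s => deg_x s <= k)%N) in rT.
rewrite [X in _ + X](slice_bigID _ _ (fun s => deg_y s <= k)%N) in rT.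
rewrite [X in _ + (_ + X)](slice_eq0_z hker) ?addr0 in rT; last first.
  by move=> s /andP[/andP[_ nx] ny]; apply: deg_z_le.
apply: leq_trans hr _; rewrite mulSn addnC leq_add2l mul2n -addnn.
apply: leq_trans rT _; apply: leq_trans (mxrank_add _ _) _.
by apply: leq_add; [apply: rank_slice_x | apply: rank_slice_y] => s /andP[].
Qed.

End SliceRank.

Section CountLowSupport.
Variables (I : finType) (D : nat).
Local Notation V := {ffun I -> 'I_D.+1}.

Let weight (g : V) : nat := \prod_i (if g i != ord0 then 2 else D).

Let sum_weight : (\sum_g weight g = (3 * D) ^ #|I|)%N.
Proof.
rewrite -(bigA_distr_bigA (fun i (v : 'I_D.+1) => if v != ord0 then 2 else D)%N).
rewrite -prod_nat_const; apply: eq_bigr => i _.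
rewrite (bigD1 ord0) //= (eq_bigr (fun _ => 2%N)) => [|v -> //].
rewrite (eq_bigl (mem [set~ ord0])) => [|v]; last by rewrite !inE.
by rewrite sum_nat_const cardsC1 card_ord /=; lia.
Qed.

Let weightE g : weight g = (2 ^ #|supp g| * D ^ #|~: supp g|)%N.
Proof.
rewrite /weight (bigID (mem (supp g))) /= -!prod_nat_const.
congr (_ * _)%N; apply: eq_big => [i|i]; rewrite ?inE //.
- by move=> ->.
- by move=> /negbTE ->.
Qed.

Lemma card_low_supp (k : nat) : (2 <= D)%N ->
  (#|low_supp I D k| * 2 ^ k <= 3 ^ #|I| * D ^ k)%N.
Proof.
move=> hD; have D_gt0 : (0 < D)%N by apply: leq_trans hD.
have low_weight g : g \in low_supp I D k -> (2 ^ k * D ^ #|I| <= D ^ k * weight g)%N.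
  rewrite inE weightE -(cardsC (supp g)); move: #|supp g| #|~: supp g| => s c hs.
  have le2D t : (2 ^ t <= D ^ t)%N by elim: t => // t IH; rewrite !expnS leq_mul.
  rewrite -(subnKC hs) !expnD; move: (le2D (k - s)%N).
  move: (2 ^ s)%N (D ^ s)%N (D ^ c)%N (2 ^ (k - s))%N (D ^ (k - s))%N.
  by move=> a b d t u /(leq_mul (leqnn (a * b * d))); nia.
rewrite -(@leq_pmul2r (D ^ #|I|)) ?expn_gt0 ?D_gt0 // -mulnA -sum1_card big_distrl /=.
apply: leq_trans (_ : \sum_(g in low_supp I D k) D ^ k * weight g <= _)%N.
  by apply: leq_sum => g; rewrite mul1n; apply: low_weight.
apply: leq_trans (_ : \sum_g D ^ k * weight g <= _)%N.
  by rewrite [X in (_ <= X)%N](bigID (mem (low_supp I D k))) leq_addr.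
by rewrite -big_distrr /= sum_weight expnMn; rewrite mulnCA mulnA.
Qed.

End CountLowSupport.

Section CartesianPower.
Variables (I T : finType) (m : nat).
Local Notation V := {ffun I -> T}.

Definition flatten_tuple (t : {ffun 'I_m -> V}) : {ffun I * 'I_m -> T} :=
  [ffun p => t p.2 p.1].

Definition cartesian_power (A : {set V}) := flatten_tuple @: [set t | t \in ffun_on A].

Lemma flatten_tuple_inj : injective flatten_tuple.
Proof.
move=> t1 t2 /ffunP e; apply/ffunP => j; apply/ffunP => i.
by have := e (i, j); rewrite !ffunE.
Qed.

Lemma card_cartesian_power A : #|cartesian_power A| = (#|A| ^ m)%N.
Proof.
by rewrite card_imset ?cardsE ?card_ffun_on ?card_ord //; apply: flatten_tuple_inj.
Qed.

Lemma no_sunflower_cartesian_power A : no_sunflower A -> no_sunflower (cartesian_power A).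
Proof.
move=> hA X Y Z /imsetP[tx /[!inE] /ffun_onP hx ->] /imsetP[ty /[!inE] /ffun_onP hy ->].
move=> /imsetP[tz /[!inE] /ffun_onP hz ->] hn.
have [j hj] : exists j, ~~ ((tx j == ty j) && (ty j == tz j)).
  apply/existsP; apply: contraR hn; rewrite negb_exists => /forallP h.
  have [-> ->] : tx = ty /\ ty = tz.
    by split; apply/ffunP => j; have /negPn/andP[/eqP ? /eqP ?] := h j.
  by rewrite !eqxx.
by have [i hi] := hA _ _ _ (hx j) (hy j) (hz j) hj; exists (i, j); rewrite !ffunE.
Qed.

End CartesianPower.

Local Close Scope ring_scope.
Local Open Scope R_scope.

Lemma INR_expn (m n : nat) : INR (m ^ n)%N = INR m ^ n.
Proof. by elim: n => [|n IH]; rewrite ?expn0 // expnS mult_INR IH. Qed.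

(* The tensor power trick: a constant factor disappears in the limit. *)
Lemma le_of_pow_le_scale (a b C : R) :
  0 < b -> (forall m : nat, a ^ m <= C * b ^ m) -> a <= b.
Proof.
move=> hb hm; apply: Rnot_lt_le => hab; set e := a / b - 1.
have he : 0 < e.
  rewrite /e; apply: Rlt_Rminus; apply: (Rmult_lt_reg_r b) => //.
  by rewrite Rmult_1_l /Rdiv Rmult_assoc Rinv_l ?Rmult_1_r //; lra.
have [n hn] := INR_archimed e C he.
have ea : a = (1 + e) * b by rewrite /e /Rdiv; field; lra.
have bn_pos : 0 < b ^ n by apply: pow_lt.
have : C < (1 + e) ^ n by apply: (Rlt_le_trans _ _ _ _ (Rfunctions.poly n e he)); lra.
have := hm n; rewrite ea Rpow_mult_distr => h1 h2.
by have := Rmult_lt_compat_r _ _ _ bn_pos h2; lra.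
Qed.

Lemma pow_le_Rpower_pow (q : R) (k K : nat) : 1 <= q -> (3 * k <= 2 * K)%N ->
  q ^ k <= Rpower q (2 / 3) ^ K.
Proof.
move=> hq hk; rewrite -(Rpower_pow K); last by apply: exp_pos.
rewrite Rpower_mult -(Rpower_pow k); last lra.
apply: Rle_Rpower => //.
have := le_INR _ _ (elimT leP hk); rewrite !mult_INR /=; lra.
Qed.

Lemma c_const_succ (d : nat) : (0 < d)%N ->
  c_const d.+1 = 3 * Rpower (INR d / 2) (2 / 3).
Proof.
move=> hd; have hd0 : 0 < INR d by apply: lt_0_INR; apply/ltP.
rewrite /c_const; have -> : INR d.+1 - 1 = INR d / 2 * 2 by rewrite S_INR; field.
rewrite -Rpower_mult_distr; try lra.
have := exp_pos (2 / 3 * ln 2); rewrite /Rpower => hp.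
by field; lra.
Qed.

Lemma card_no_sunflower_le (I : finType) (d : nat) (A : {set {ffun I -> 'I_d.+1}}) :
  (2 <= d)%N -> no_sunflower A -> INR #|A| <= 3 * c_const d.+1 ^ #|I|.
Proof.
move=> hd hA; set k := ((2 * #|I|) %/ 3)%N.
have hN : (#|A| * 2 ^ k <= 3 * (3 ^ #|I| * d ^ k))%N.
  apply: leq_trans (leq_mul (card_no_sunflower_le_low_supp hA) (leqnn _)) _.
  by rewrite -mulnA leq_mul2l card_low_supp.
have hd2 : 2 <= INR d by have := le_INR 2 d (elimT leP hd); rewrite /=; lra.
set q := INR d / 2; have hq : 1 <= q by rewrite /q; lra.
have hq2 : INR #|A| * 2 ^ k <= 3 * 3 ^ #|I| * q ^ k * 2 ^ k.
  have := le_INR _ _ (elimT leP hN); rewrite !mult_INR !INR_expn.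
  have -> : INR d = q * 2 by rewrite /q; field.
  have e2 : INR 2 = 2 by rewrite /=; lra.
  have e3 : INR 3 = 3 by rewrite /=; lra.
  by rewrite Rpow_mult_distr e2 e3; lra.
have hqk : q ^ k <= Rpower q (2 / 3) ^ #|I|.
  by apply: pow_le_Rpower_pow => //; rewrite /k mulnC; apply: leq_trunc_div.
rewrite c_const_succ ?(ltnW hd) // Rpow_mult_distr -Rmult_assoc.
apply: Rle_trans (Rmult_le_reg_r (2 ^ k) _ _ _ hq2) _; first by apply: pow_lt; lra.
by apply: Rmult_le_compat_l hqk; apply: Rmult_le_pos; [lra | apply: pow_le; lra].
Qed.

Local Close Scope R_scope.

Theorem theorem1p5 (D n : nat) (A : {set vec D n}) :
  3 <= D -> 1 <= n -> sunflower_free A ->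
  (INR #|A| <= c_const D ^ n)%R.
Proof.
case: D A => [//|d] A; rewrite ltnS => hd _ /sunflower_free_no_sunflower hA.
have c_pos : (0 < c_const d.+1)%R.
  rewrite c_const_succ ?(ltnW hd) //.
  by have := exp_pos (2 / 3 * ln (INR d / 2)); rewrite /Rpower; lra.
apply: (le_of_pow_le_scale (C := 3)); first exact: pow_lt.
move=> m; rewrite -pow_mult -INR_expn -(card_cartesian_power m).
have := card_no_sunflower_le hd (no_sunflower_cartesian_power (m := m) hA).
by rewrite card_prod !card_ord.
Qed.
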